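(* Let $H$ be a real Hilbert space with inner product $(\cdot,\cdot)$ and norm $\|\cdot\|$, let $G:H\to H$ be a bounded, self-adjoint, positive definite linear operator, and let $\bar u,\epsilon\in H$ with $\|\epsilon\|\le\epsilon_0$. Let $\alpha>0$ and let $(u_j)_{j\ge0}$ be the Mitlar iterates with data $\bar u$: $[(1-\alpha)G+\alpha I]u_0=\bar u$ and $[(1-\alpha)G+\alpha I](u_j-u_{j-1})=\bar u-Gu_{j-1}$ for $j\ge1$. Define the noisy functional $E_\epsilon(v)=\frac12(Gv,v)-(\bar u+\epsilon,v)$ for $v\in H$. If for some $j\ge0$ we have $u_{j+1}\neq u_j$ and $$\frac{\epsilon_0}{\|u_{j+1}-u_j\|}\le\alpha\le\frac12,$$ then $E_\epsilon(u_{j+1})\le E_\epsilon(u_j)$.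
   Context: This is the setting of the noisy deconvolution problem $Gu=\bar u+\epsilon$, whose solution $u$ is the minimizer of $E_\epsilon$. *)

From HB Require Import structures.
From mathcomp Require Import all_boot all_order all_algebra.
From mathcomp Require Import all_classical all_reals all_analysis.
Set Implicit Arguments. Unset Strict Implicit. Unset Printing Implicit Defensive.
Import Order.TTheory GRing.Theory Num.Theory.
Local Open Scope ring_scope.

Section Hilbert.
Variables (R : realType) (V : completeNormedModType R).

(* ip is a real inner product on V inducing the norm of V; since V is
   complete, (V, ip) is a real Hilbert space. *)
Definition is_inner_product (ip : V -> V -> R) : Prop :=
  [/\ (forall u v, ip u v = ip v u),
      (forall (a : R) u v w, ip (a *: u + v) w = a * ip u w + ip v w),
      (forall v, 0 <= ip v v),
      (forall v, ip v v = 0 -> v = 0)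
    & (forall v, `|v| = Num.sqrt (ip v v))].

Definition bounded_linear (G : V -> V) : Prop :=
  (forall (a : R) u v, G (a *: u + v) = a *: G u + G v) /\
  exists C : R, forall v, `|G v| <= C * `|v|.

Definition self_adjoint (ip : V -> V -> R) (G : V -> V) : Prop :=
  forall u v, ip (G u) v = ip u (G v).

Definition positive_definite (ip : V -> V -> R) (G : V -> V) : Prop :=
  forall v, v != 0 -> 0 < ip (G v) v.

Definition mitlar_iterates (G : V -> V) (alpha : R) (ubar : V) (u : nat -> V)
  : Prop :=
  (1 - alpha) *: G (u 0%N) + alpha *: u 0%N = ubar /\
  forall j : nat,
    (1 - alpha) *: G (u j.+1 - u j) + alpha *: (u j.+1 - u j) = ubar - G (u j).

Definition E_noisy (ip : V -> V -> R) (G : V -> V) (ubar eps : V) (v : V) : R :=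
  2^-1 * ip (G v) v - ip (ubar + eps) v.

End Hilbert.

From HB Require Import structures.
From mathcomp Require Import all_boot all_order all_algebra.
From mathcomp Require Import all_classical all_reals all_analysis.
From mathcomp Require Import lra.
Set Implicit Arguments. Unset Strict Implicit. Unset Printing Implicit Defensive.
Import Order.TTheory GRing.Theory Num.Theory.
Local Open Scope ring_scope.

(* Write w = u_j and d = u_{j+1} - u_j. The Mitlar step says
   ubar - G w = (1 - alpha) G d + alpha d, and expanding the quadratic
   functional gives
     E_eps(w + d) - E_eps(w) = (alpha - 1/2) (G d, d) - alpha |d|^2 - (eps, d).
   The first term is nonpositive because alpha <= 1/2 and G is positive, and
   the noise term is dominated by the second one: |eps| <= eps0 <= alpha |d|. *)

Section InnerProduct.
Variables (R : realType) (V : completeNormedModType R) (ip : V -> V -> R).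
Hypothesis ipP : is_inner_product ip.

Lemma ip0l (z : V) : ip 0 z = 0.
Proof.
case: ipP => _ ipL _ _ _.
by have := ipL 1 0 0 z; rewrite scale1r addr0 mul1r => h; lra.
Qed.

Lemma ipDl (x y z : V) : ip (x + y) z = ip x z + ip y z.
Proof. by case: ipP => _ ipL _ _ _; have := ipL 1 x y z; rewrite scale1r mul1r. Qed.

Lemma ipZl (a : R) (x z : V) : ip (a *: x) z = a * ip x z.
Proof. by case: ipP => _ ipL _ _ _; rewrite -[a *: x]addr0 ipL ip0l addr0. Qed.

Lemma ipNl (x z : V) : ip (- x) z = - ip x z.
Proof. by rewrite -scaleN1r ipZl mulN1r. Qed.

Lemma ipDr (x y z : V) : ip z (x + y) = ip z x + ip z y.
Proof. by case: ipP => ipC _ _ _ _; rewrite ipC ipDl ![ip _ z]ipC. Qed.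

Lemma ipZr (a : R) (x z : V) : ip z (a *: x) = a * ip z x.
Proof. by case: ipP => ipC _ _ _ _; rewrite ipC ipZl ipC. Qed.

Lemma ip_norm2 (x : V) : `|x| ^+ 2 = ip x x.
Proof. by case: ipP => _ _ ip_ge0 _ ->; rewrite sqr_sqrtr. Qed.

(* Instead of Cauchy-Schwarz we only need 0 <= |e + a d|^2. *)
Lemma ip_ge_of_norm_le (a : R) (e d : V) :
  0 < a -> `|e| <= a * `|d| -> 0 <= a * ip d d + ip e d.
Proof.
case: ipP => ipC _ ip_ge0 _ _ a_gt0 e_small.
have e2_le : ip e e <= a ^+ 2 * ip d d.
  rewrite -!ip_norm2 -exprMn.
  by apply: lerXn2r; rewrite ?nnegrE // mulr_ge0 // ltW.
have := ip_ge0 (e + a *: d).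
rewrite !(ipDl, ipDr, ipZl, ipZr) (ipC d e) => sq_ge0.
have : 0 <= a * (2 * (ip e d + a * ip d d)) by rewrite expr2 in e2_le; nra.
by rewrite !pmulr_rge0 // addrC.
Qed.

End InnerProduct.

Section Energy.
Variables (R : realType) (V : completeNormedModType R).
Variables (ip : V -> V -> R) (G : V -> V).
Hypotheses (ipP : is_inner_product ip) (G_sa : self_adjoint ip G).
Hypothesis G_lin : forall (a : R) u v, G (a *: u + v) = a *: G u + G v.

Lemma linearD_G (x y : V) : G (x + y) = G x + G y.
Proof. by have := G_lin 1 x y; rewrite !scale1r. Qed.

Lemma E_noisyD (ubar eps w d : V) :
  E_noisy ip G ubar eps (w + d) =
  E_noisy ip G ubar eps w + ip (G w - (ubar + eps)) d + 2^-1 * ip (G d) d.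
Proof.
rewrite /E_noisy linearD_G !(ipDl ipP, ipDr ipP, ipNl ipP) (G_sa d w).
by case: ipP => ipC _ _ _ _; rewrite (ipC d (G w)); lra.
Qed.

Lemma E_noisy_mitlar_step (ubar eps w d : V) (alpha : R) :
  ubar - G w = (1 - alpha) *: G d + alpha *: d ->
  E_noisy ip G ubar eps (w + d) - E_noisy ip G ubar eps w =
  (alpha - 2^-1) * ip (G d) d - alpha * ip d d - ip eps d.
Proof.
move=> step; rewrite E_noisyD addrAC opprD addrA -(opprB ubar) step.
by rewrite !(ipDl ipP, ipNl ipP, ipZl ipP); lra.
Qed.

End Energy.

Theorem mainTheorem10 (R : realType) (V : completeNormedModType R)
  (ip : V -> V -> R) (G : V -> V) (ubar eps : V) (eps0 alpha : R)
  (u : nat -> V) (j : nat) :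
  is_inner_product ip ->
  bounded_linear G ->
  self_adjoint ip G ->
  positive_definite ip G ->
  `|eps| <= eps0 ->
  0 < alpha ->
  mitlar_iterates G alpha ubar u ->
  u j.+1 != u j ->
  eps0 / `|u j.+1 - u j| <= alpha ->
  alpha <= 2^-1 ->
  E_noisy ip G ubar eps (u j.+1) <= E_noisy ip G ubar eps (u j).
Proof.
move=> ipP [G_lin _] G_sa G_pd eps_le alpha_gt0 [_ step] uS_neq alpha_ge alpha_le.
set d := u j.+1 - u j.
have d_neq0 : d != 0 by rewrite subr_eq0.
have eps_small : `|eps| <= alpha * `|d|.
  by rewrite (le_trans eps_le) // -ler_pdivrMr ?normr_gt0.
have noise := ip_ge_of_norm_le ipP alpha_gt0 eps_small.
have curvature : (alpha - 2^-1) * ip (G d) d <= 0.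
  by rewrite mulr_le0_ge0 ?subr_le0 // ltW // G_pd.
have step_j : ubar - G (u j) = (1 - alpha) *: G d + alpha *: d by rewrite step.
have -> : u j.+1 = u j + d by rewrite addrC subrK.
by rewrite -subr_le0 (E_noisy_mitlar_step ipP G_sa G_lin _ step_j) -addrA -opprD
  subr_le0 (le_trans curvature).
Qed.
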